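(* Let $\mathcal X=\{1,\dots,N\}$ with $N\ge2$, let $T\ge2$, let $\mathrm{PWS}$ be a piecewise stationary source for sequences of length $T$ with complexity $C_{\mathrm{PWS}}$, and let $u$ be the uniform distribution on $\mathcal X$. Let $\mathrm{PS}$ be the Probability Smoothing model with share factors $\varepsilon_t=\frac1{t+1}$, smoothing rates $\alpha_t=\exp\!\Big(-\sqrt{\frac{\log(N/\varepsilon_t)}{2Nt}}\Big)$, and an initial distribution $p$ with $p(x)\ge\frac{\varepsilon_1}{N-1}$ for all $x\in\mathcal X$. Then for every sequence $x_{1:T}\in\mathcal X^T$, \[ \ell_{\mathrm{PS}}(x_{1:T})\le\ell_{\mathrm{PWS}}(x_{1:T})+\sqrt{2N(T+1)\log(N(T+1))}\cdot(1+C_{\mathrm{PWS}})+\sqrt{\frac{128NT}{\log T}}+O(N\log T). \]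
   Context: All logarithms are natural, with $\log\frac10=+\infty$. A model maps each finite sequence $x_{1:t}$ over $\mathcal X$ (including the empty one) to a distribution on $\mathcal X$; $M(x;x_{1:t})$ denotes the probability of $x$. Code length: $\ell_M(x_{1:T})=\sum_{t=1}^T\log\frac1{M(x_t;x_{<t})}$ with $x_{<t}=x_{1:t-1}$. Probability Smoothing with parameters $(\alpha_{1:\infty},\varepsilon_{1:\infty},p)$: $\mathrm{PS}(\cdot;\text{empty})=p$, and for $t\ge1$, $\mathrm{PS}(x;x_{1:t})=\alpha_t\,\mathrm{PS}(x;x_{<t})+(1-\alpha_t)(1-\varepsilon_t)$ if $x=x_t$ and $=\alpha_t\,\mathrm{PS}(x;x_{<t})+(1-\alpha_t)\frac{\varepsilon_t}{N-1}$ if $x\ne x_t$. A piecewise stationary source (PWS) for length $T$ is given by a partition $\mathcal P$ of $\{1,\dots,T\}$ into consecutive integer intervals $[t_1,t_2),\dots,[t_n,t_{n+1})$ ($1=t_1<\dots<t_{n+1}=T+1$, $[i,j)=\{i,\dots,j-1\}$) and distributions $\{p_S\}_{S\in\mathcal P}$; $\ell_{\mathrm{PWS}}(x_{1:T})=\sum_{S\in\mathcal P}\sum_{t\in S}\log\frac1{p_S(x_t)}$. The transition set $\mathcal T$ consists of the triples $(t,A,B)$ with $A=[i,t)$, $B=[t,j)$ both in $\mathcal P$; the complexity is $C_{\mathrm{PWS}}=1+\sum_{(t,A,B)\in\mathcal T}\lVert p_B-p_A\rVert$ with $\lVert p-q\rVert=\sum_x|p(x)-q(x)|$. The term $O(N\log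 T)$ denotes a quantity (depending on $N$, $T$ and $p$) that, for fixed $N$, grows at most proportionally to $N\log T$ as $T\to\infty$. *)

From HB Require Import structures.
From mathcomp Require Import all_boot all_order all_algebra.
From mathcomp Require Import all_classical all_reals all_analysis.
Set Implicit Arguments. Unset Strict Implicit. Unset Printing Implicit Defensive.
Import Order.TTheory GRing.Theory Num.Theory.
Local Open Scope ring_scope.

(* Alphabet X = {1..N} is represented by 'I_N. A model maps a history
   (seq 'I_N, oldest symbol first) to a function 'I_N -> R. *)

Section Defs.
Variable R : realType.
Variable N : nat.

Definition model := seq 'I_N -> 'I_N -> R.

(* code length  l_M(x_{1:T}) = sum_{t=1}^T log 1/M(x_t; x_{<t}) ;
   t is 0-based here: x_{t+1} = tnth xs t and x_{<t+1} = take t xs *)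
Definition code_length (T : nat) (M : model) (xs : T.-tuple 'I_N) : R :=
  \sum_(t < T) ln (1 / M (take t xs) (tnth xs t)).

(* Probability smoothing, parameters alpha, eps : nat -> R (indexed from 1),
   initial distribution p.  ps_rev works on the REVERSED history. *)
Fixpoint ps_rev (alpha eps : nat -> R) (p : 'I_N -> R) (rh : seq 'I_N)
  (x : 'I_N) : R :=
  match rh with
  | [::] => p x
  | a :: rh' =>
      let t := (size rh').+1 in
      alpha t * ps_rev alpha eps p rh' x +
      (1 - alpha t) * (if x == a then 1 - eps t else eps t / (N.-1)%:R)
  end.

Definition PS (alpha eps : nat -> R) (p : 'I_N -> R) : model :=
  fun h x => ps_rev alpha eps p (rev h) x.

Definition eps_thm (t : nat) : R := 1 / (t.+1)%:R.
Definition alpha_thm (t : nat) : R :=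
  expR (- Num.sqrt (ln (N%:R / eps_thm t) / (2 * N%:R * t%:R))).

Definition is_distr (q : 'I_N -> R) : Prop :=
  (forall x, 0 <= q x) /\ \sum_x q x = 1.

(* Piecewise stationary source for length T:
   n segments, breakpoints b = [:: t_1; ...; t_{n+1}] with
   1 = t_1 < ... < t_{n+1} = T+1, segment i (i < n) is [t_{i+1}, t_{i+2})
   (0-based list index: [nth 0 b i, nth 0 b i.+1)), distribution q i. *)
Definition is_PWS (T n : nat) (b : seq nat) (q : nat -> 'I_N -> R) : Prop :=
  [/\ size b = n.+1, sorted ltn b, nth 0 b 0 = 1%N, nth 0 b n = T.+1
    & forall i, (i < n)%N -> is_distr (q i)].

(* l_PWS; position t (0-based) is time t+1 *)
Definition PWS_length (T n : nat) (b : seq nat) (q : nat -> 'I_N -> R)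
  (xs : T.-tuple 'I_N) : R :=
  \sum_(i < n) \sum_(t < T | (nth 0 b i <= t.+1 < nth 0 b i.+1)%N)
      ln (1 / q i (tnth xs t)).

Definition l1dist (p q : 'I_N -> R) : R := \sum_x `|p x - q x|.

Definition PWS_complexity (n : nat) (q : nat -> 'I_N -> R) : R :=
  1 + \sum_(i < n.-1) l1dist (q i.+1) (q i).

End Defs.

(* A potential argument.  Let [w_t] be the forecast after [t] symbols,
   [alpha_t = exp (- gamma_t)], [beta_t = 1 - alpha_t], and [u] the distribution
   of the current segment.  A smoothing step shrinks every [w_t y] by at most the
   factor [alpha_(t+1)], while the forecast of the observed symbol [x_t] gains an
   extra factor; elementary estimates on [ln] turn this into
     ln u(x_t) - ln w_t(x_t) <= Pot_t(u) - Pot_(t+1)(u) + N gamma_(t+1)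
   for a potential built from the cross entropy of [u] against [w_t] (weighted by
   [1 / beta_(t+1)]), the log-mass [sum_y ln w_t y] and [ln (t + 1)].  Forecasts
   stay above [1 / (N (T + 1))], so the cross entropy lies in [0, L] with
   [L = ln (N (T + 1))]; hence the potential telescopes within a segment, jumps by
   at most [(L / 2) / beta_(T+1) * ||p_B - p_A||] at a transition, and
   [sum_t N gamma_t <= sqrt (2 N (T + 1) L)]. *)

From HB Require Import structures.
From mathcomp Require Import all_boot all_order all_algebra.
From mathcomp Require Import all_classical all_reals all_analysis.
From mathcomp Require Import ring lra zify.
Set Implicit Arguments. Unset Strict Implicit. Unset Printing Implicit Defensive.
Import Order.TTheory GRing.Theory Num.Theory.
Local Open Scope ring_scope.

Section RealInequalities.
Variable R : realType.
Implicit Types a b c g x s D X : R.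

Lemma ln_le_subr1 x : 0 < x -> ln x <= x - 1.
Proof.
by move=> x0; have := @le_ln1Dx R (x - 1); rewrite [1 + _]addrC subrK; apply; lra.
Qed.

Lemma subr1V_le_ln x : 0 < x -> 1 - x^-1 <= ln x.
Proof.
move=> x0; have := @ln_le_subr1 x^-1; rewrite lnV ?posrE // invr_gt0 => /(_ x0).
lra.
Qed.

Lemma invr_subr1_expRN_le g : 0 < g -> (1 - expR (- g))^-1 <= g^-1 + 1.
Proof.
move=> g0; have := expR_ge1Dx g; have := expR_gt0 (- g).
have eg : expR g * expR (- g) = 1 by rewrite -expRD subrr expR0.
have -> : g^-1 + 1 = (1 + g) / g by field; rewrite gt_eqF.
rewrite ler_pdivlMr // mulrC ler_pdivrMr ?subr_gt0 ?expR_lt1 ?oppr_lt0 //; nra.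
Qed.

Lemma ln_mul_shift_le c s : 1 <= c -> 0 <= s ->
  ln (c * (s + 2)) * s <= ln (c * (s + 1)) * (s + 1).
Proof.
move=> c1 s0; have c0 : 0 < c by lra.
have gap : ln (c * (s + 2)) - ln (c * (s + 1)) <= (s + 1)^-1.
  rewrite -ln_div ?posrE ?mulr_gt0 //; try lra.
  have := @ln_le_subr1 (c * (s + 2) / (c * (s + 1))).
  have -> : c * (s + 2) / (c * (s + 1)) - 1 = (s + 1)^-1.
    by field; rewrite !gt_eqF //; lra.
  by apply; rewrite divr_gt0 ?mulr_gt0 //; lra.
have low : s / (s + 1) <= ln (c * (s + 1)).
  have := @subr1V_le_ln (c * (s + 1)) ltac:(rewrite mulr_gt0 //; lra).
  have : (c * (s + 1))^-1 <= (s + 1)^-1.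
    by rewrite lef_pV2 ?posrE ?mulr_gt0 //; nra.
  have -> : s / (s + 1) = 1 - (s + 1)^-1 by field; rewrite gt_eqF //; lra.
  lra.
have : (ln (c * (s + 2)) - ln (c * (s + 1))) * s <= s / (s + 1).
  by rewrite mulrC; apply: ler_wpM2l.
nra.
Qed.

Lemma le_sqrt_increment D s X : 0 <= s -> 0 <= X ->
  X ^+ 2 * (4 * (s + 1)) <= D -> X <= Num.sqrt (D * (s + 1)) - Num.sqrt (D * s).
Proof.
move=> s0 X0 hD; have D0 : 0 <= D by apply: le_trans hD; rewrite mulr_ge0 ?sqr_ge0 //; lra.
set u := Num.sqrt (D * (s + 1)); set r := Num.sqrt (D * s).
have u2 : u ^+ 2 = D * (s + 1) by rewrite sqr_sqrtr // mulr_ge0 //; lra.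
have r2 : r ^+ 2 = D * s by rewrite sqr_sqrtr // mulr_ge0.
have u0 : 0 <= u := sqrtr_ge0 _.
have r0 : 0 <= r := sqrtr_ge0 _.
have ru : r <= u by nra.
have uX : (2 * u * X) ^+ 2 <= D ^+ 2.
  have -> : (2 * u * X) ^+ 2 = 4 * u ^+ 2 * X ^+ 2 by ring.
  rewrite u2; nra.
have {}uX : 2 * u * X <= D by nra.
have Dur : D <= 2 * u * (u - r) by nra.
have [u_eq0|upos] := eqVneq u 0; last first.
  have : 0 < u by rewrite lt_def upos u0.
  nra.
rewrite u_eq0 mulr0 mul0r in Dur.
have : X ^+ 2 * (4 * (s + 1)) <= 0 by lra.
nra.
Qed.

Lemma le_sqrt_mul x D : 0 <= x -> x <= D -> x <= Num.sqrt (D * x).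
Proof.
move=> x0 xD; rewrite -[leLHS]ger0_norm // -sqrtr_sqr ler_sqrt ?mulr_ge0 //; last lra.
by rewrite expr2 ler_wpM2r.
Qed.

(* One smoothing step seen from the comparator: [a] is the predicted probability
   of the observed symbol, [b] its comparator probability, [c = 1 - eps] the
   target mass, and [1 + z] the factor by which that prediction grows beyond
   [al * a] after the update. *)
Lemma ln_ratio_le_smoothing_gain a b c g (al be z : R) :
  0 < a -> 0 < b -> 0 < c -> 0 < g ->
  al = expR (- g) -> be = 1 - al -> z = be * c / (al * a) ->
  ln b - ln a <= (b * ln (1 + z) - g) / be - ln c + ln (1 + z).
Proof.
move=> a0 b0 c0 g0 eal ebe ez.
have al0 : 0 < al by rewrite eal expR_gt0.
have be0 : 0 < be by rewrite ebe eal subr_gt0 expR_lt1 oppr_lt0.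
have z0 : 0 < z by rewrite ez divr_gt0 ?mulr_gt0.
move el : (ln (1 + z)) => l.
have l0 : 0 < l by rewrite -el; apply: ln_gt0; lra.
have zl : z <= (1 + z) * l.
  have := @subr1V_le_ln (1 + z) ltac:(lra); rewrite el.
  have -> : 1 - (1 + z)^-1 = z / (1 + z) by field; rewrite gt_eqF //; lra.
  by rewrite ler_pdivrMr 1?mulrC //; lra.
have ln_bl : ln b + ln l - ln be <= b * l / be - 1.
  have := @ln_le_subr1 (b * l / be) (divr_gt0 (mulr_gt0 b0 l0) be0).
  by rewrite !lnM ?lnV ?posrE ?invr_gt0 ?mulr_gt0.
have ln_z : ln z <= l + ln l.
  have e : ln ((1 + z) * l) = l + ln l by rewrite lnM ?posrE ?el //; lra.
  by rewrite -e ler_ln ?posrE //; apply: mulr_gt0 => //; lra.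
have g_be : g / be <= 1 + g.
  have := invr_subr1_expRN_le g0; rewrite -eal -ebe => h.
  have : g * be^-1 <= g * (g^-1 + 1) by apply: ler_wpM2l => //; lra.
  by rewrite mulrDr mulfV ?gt_eqF // mulr1.
have ln_be : ln be = ln z - g + ln a - ln c.
  have -> : be = z * al * a / c by rewrite ez; field; rewrite !gt_eqF.
  have lal : ln al = - g by rewrite eal expRK.
  by rewrite !lnM ?lnV ?posrE ?invr_gt0 ?mulr_gt0 // lal; ring.
have -> : (b * l - g) / be = b * l / be - g / be by rewrite mulrBl.
lra.
Qed.

End RealInequalities.

Section Sums.
Variable V : zmodType.

Lemma big_ord_range_cond T a c (F : nat -> V) : (c <= T)%N ->
  \sum_(t < T | (a <= t < c)%N) F t = \sum_(a <= t < c) F t.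
Proof.
move=> cT; rewrite -(big_ord_widen_cond T (fun t => (a <= t)%N) F cT).
by rewrite big_geq_mkord.
Qed.

Lemma big_ord_consecutive_ranges T (s : nat -> nat) n (F : 'I_T -> V) :
  (forall i j, (i <= j <= n)%N -> (s i <= s j)%N) ->
  \sum_(i < n) \sum_(t < T | (s i <= t < s i.+1)%N) F t
    = \sum_(t < T | (s 0 <= t < s n)%N) F t.
Proof.
elim: n => [_|n IH s_mono].
  by rewrite big_ord0 big_pred0 // => t; case: leqP.
rewrite big_ord_recr /= IH => [|i j /andP[ij jn]]; last by apply: s_mono; lia.
have s0n : (s 0 <= s n)%N by apply: s_mono; lia.
have snn : (s n <= s n.+1)%N by apply: s_mono; lia.
rewrite [RHS](bigID (fun t : 'I_T => (t < s n)%N)) /=; congr (_ + _); apply: eq_bigl => t;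
  by case: (leqP (s 0%N) t) => ?; case: (ltnP t (s n)) => ?;
     case: (ltnP t (s n.+1)) => ? //=; exfalso; lia.
Qed.

Lemma sumr_telescope_switch (G : nat -> nat -> V) n : (0 < n)%N ->
  \sum_(i < n) (G i i - G i.+1 i) =
  G 0%N 0%N - G n n.-1 + \sum_(i < n.-1) (G i.+1 i.+1 - G i.+1 i).
Proof.
case: n => // n _; rewrite sumrB big_ord_recl big_ord_recr /= opprD [- _ - _]addrC addrACA.
by rewrite -sumrB.
Qed.

End Sums.

Section Rates.
Variable R : realType.
Variable N : nat.
Hypothesis N2 : (2 <= N)%N.

Definition gamma (t : nat) : R :=
  Num.sqrt (ln (N%:R * t.+1%:R) / (2 * N%:R * t%:R)).
Definition beta (t : nat) : R := 1 - alpha_thm R N t.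

Lemma eps_thmE t : eps_thm R t = (t.+1%:R)^-1.
Proof. by rewrite /eps_thm div1r. Qed.

Lemma alpha_thmE t : alpha_thm R N t = expR (- gamma t).
Proof. by rewrite /alpha_thm eps_thmE invrK. Qed.

Lemma ln_mulNS_gt0 t : 0 < ln (N%:R * t.+1%:R : R).
Proof. by apply: ln_gt0; rewrite -natrM ltr1n; nia. Qed.

Lemma gamma_gt0 t : (0 < t)%N -> 0 < gamma t.
Proof. by move=> t0; rewrite sqrtr_gt0 divr_gt0 ?ln_mulNS_gt0 // !mulr_gt0 // ltr0n; lia. Qed.

Lemma beta_gt0 t : (0 < t)%N -> 0 < beta t.
Proof.
by move=> t0; rewrite /beta alpha_thmE subr_gt0 expR_lt1 oppr_lt0 gamma_gt0.
Qed.

Lemma gamma_succ_le t : (0 < t)%N -> gamma t.+1 <= gamma t.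
Proof.
move=> t0; have N1 : (1 : R) <= N%:R by rewrite ler1n; lia.
have key := @ln_mul_shift_le R N%:R t%:R N1 (ler0n _ _).
have e1 : t.+1%:R = t%:R + 1 :> R by rewrite natr1.
have e2 : t.+2%:R = t%:R + 2 :> R by rewrite -addn2 natrD.
rewrite ler_sqrt; last by rewrite divr_ge0 ?mulr_ge0 // ltW ?ln_mulNS_gt0.
have N0 : (0 : R) < N%:R by lra.
have tR : (0 : R) < t%:R by rewrite ltr0n.
rewrite ler_pdivrMr ?mulr_gt0 ?N0 ?ltr0n // mulrAC ler_pdivlMr ?mulr_gt0 ?N0 //.
rewrite e1 e2; nra.
Qed.

Lemma beta_le m n : (m <= n)%N -> beta n.+1 <= beta m.+1.
Proof.
apply: (Order.NatMonotonyTheory.nonincnP (f := fun t => beta t.+1)) => t.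
by rewrite /beta !alpha_thmE lerD2l lerN2 ler_expR lerN2 gamma_succ_le.
Qed.

Lemma ln_mulNS_le m n : (m <= n)%N -> ln (N%:R * m.+1%:R : R) <= ln (N%:R * n.+1%:R).
Proof.
move=> mn; rewrite ler_ln ?posrE ?mulr_gt0 ?ltr0n //; try lia.
by rewrite ler_pM2l ?ltr0n ?ler_nat //; lia.
Qed.

Lemma sum_gamma_le T : \sum_(k < T) N%:R * gamma k.+1 <=
  Num.sqrt (2 * N%:R * T.+1%:R * ln (N%:R * T.+1%:R)).
Proof.
set D := 2 * N%:R * ln (N%:R * T.+1%:R) : R.
have N0 : (0 : R) < N%:R by rewrite ltr0n; lia.
have L0 := ln_mulNS_gt0 T.
have step (k : 'I_T) : N%:R * gamma k.+1 <= Num.sqrt (D * k.+1%:R) - Num.sqrt (D * k%:R).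
  have k0 : (0 : R) <= k%:R := ler0n _ _.
  have := @le_sqrt_increment R D k%:R (N%:R * gamma k.+1); rewrite natr1; apply.
  - exact: k0.
  - by rewrite mulr_ge0 ?sqrtr_ge0 ?ler0n.
  - rewrite exprMn sqr_sqrtr; last by rewrite divr_ge0 ?mulr_ge0 // ltW ?ln_mulNS_gt0.
    have -> : N%:R ^+ 2 * (ln (N%:R * k.+2%:R) / (2 * N%:R * k.+1%:R)) * (4 * k.+1%:R)
        = 2 * N%:R * ln (N%:R * k.+2%:R) :> R.
      by field; rewrite !gt_eqF //; lra.
    by rewrite /D; apply: ler_wpM2l; [rewrite mulr_ge0 // ltW | exact: ln_mulNS_le].
apply: le_trans (ler_sum _ (fun k _ => step k)) _.
rewrite -(big_mkord xpredT (fun k => Num.sqrt (D * k.+1%:R) - Num.sqrt (D * k%:R))).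
rewrite (telescope_sumr (fun k => Num.sqrt (D * k%:R))) // mulr0 sqrtr0 subr0.
have D0 : 0 <= D by rewrite /D !mulr_ge0 ?ler0n ?ltW.
have -> : 2 * N%:R * T.+1%:R * ln (N%:R * T.+1%:R) = D * T.+1%:R by rewrite /D; ring.
rewrite ler_sqrt ?mulr_ge0 ?ler0n ?(ltW L0) //.
by apply: ler_wpM2l => //; rewrite ler_nat.
Qed.

Lemma ln_div_beta_le T : ln (N%:R * T.+1%:R) / beta T.+1 <=
  Num.sqrt (2 * N%:R * T.+1%:R * ln (N%:R * T.+1%:R)) + ln (N%:R * T.+1%:R) :> R.
Proof.
set L := ln (N%:R * T.+1%:R : R); set S := Num.sqrt (2 * N%:R * T.+1%:R * L).
have N0 : (0 : R) < N%:R by rewrite ltr0n; lia.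
have L0 : 0 < L := ln_mulNS_gt0 T.
have T0 : (0 : R) <= T%:R := ler0n _ _.
have g0 : 0 < gamma T.+1 := @gamma_gt0 T.+1 isT.
have L_le_gS : L <= gamma T.+1 * S.
  rewrite -sqrtrM; last by rewrite divr_ge0 ?mulr_ge0 // ltW ?ln_mulNS_gt0.
  have -> : ln (N%:R * T.+2%:R) / (2 * N%:R * T.+1%:R) * (2 * N%:R * T.+1%:R * L)
      = ln (N%:R * T.+2%:R) * L by field; rewrite !gt_eqF //; lra.
  by apply: le_sqrt_mul; rewrite ?ln_mulNS_le // ltW.
have := invr_subr1_expRN_le g0; rewrite -alpha_thmE -/(beta _) => beta_inv.
have L_div_beta := ler_wpM2l (ltW L0) beta_inv.
have : L * (gamma T.+1)^-1 <= S by rewrite ler_pdivrMr // mulrC.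
lra.
Qed.

Lemma ln_mulNS_le_sqrt T : ln (N%:R * T.+1%:R) <=
  Num.sqrt (2 * N%:R * T.+1%:R * ln (N%:R * T.+1%:R)) :> R.
Proof.
have L0 := ln_mulNS_gt0 T; have NT0 : (0 : R) < N%:R * T.+1%:R by rewrite -natrM ltr0n; nia.
apply: le_sqrt_mul; first exact: ltW.
by have := ln_sublinear NT0; lra.
Qed.

End Rates.

Section Smoothing.
Variable R : realType.
Variable N : nat.

Definition smooth_target (eps : nat -> R) (t : nat) (a y : 'I_N) : R :=
  if y == a then 1 - eps t else eps t / (N.-1)%:R.

Lemma PS_rcons alpha eps (p : 'I_N -> R) h a y :
  PS alpha eps p (rcons h a) y = alpha (size h).+1 * PS alpha eps p h y
    + (1 - alpha (size h).+1) * smooth_target eps (size h).+1 a y.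
Proof. by rewrite /PS rev_rcons /= size_rev. Qed.

Lemma sum_if_eq (F : 'I_N -> R) a : \sum_y (if y == a then F y else 0) = F a.
Proof. by rewrite -big_mkcond big_pred1_eq. Qed.

Lemma is_distr_le1 (u : 'I_N -> R) y : is_distr u -> u y <= 1.
Proof.
case=> u0 <-; rewrite (bigD1 y) //= lerDl.
by apply: sumr_ge0 => i _; apply: u0.
Qed.

End Smoothing.

Section Dynamics.
Variable R : realType.
Variable N : nat.
Hypothesis N2 : (2 <= N)%N.
Variable p : 'I_N -> R.
Hypothesis p_distr : is_distr p.
Hypothesis p_ge : forall x, eps_thm R 1 / (N.-1)%:R <= p x.
Variable T : nat.
Hypothesis T_gt0 : (0 < T)%N.
Variable xs : T.-tuple 'I_N.

Definition forecast (t : nat) : 'I_N -> R :=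
  PS (alpha_thm R N) (eps_thm R) p (take t xs).

Lemma forecast0 : forecast 0 = p.
Proof. by rewrite /forecast take0. Qed.

Lemma forecastS (t : 'I_T) y : forecast t.+1 y =
  alpha_thm R N t.+1 * forecast t y
  + (1 - alpha_thm R N t.+1) * smooth_target (eps_thm R) t.+1 (tnth xs t) y.
Proof.
rewrite /forecast (take_nth (tnth xs t)) ?size_tuple // -tnth_nth PS_rcons.
by rewrite size_takel // size_tuple ltnW.
Qed.

Lemma predN_ge1 : (1 : R) <= (N.-1)%:R.
Proof. by rewrite ler1n; lia. Qed.

Lemma smooth_target_bounds t (a y : 'I_N) : (0 < t)%N ->
  eps_thm R t / (N.-1)%:R <= smooth_target (eps_thm R) t a y <= 1.
Proof.
move=> t0; have N1 := predN_ge1.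
have e0 : 0 < eps_thm R t by rewrite eps_thmE invr_gt0 ltr0n.
have e2 : eps_thm R t <= 2^-1.
  by rewrite eps_thmE lef_pV2 ?posrE ?ltr0n // (ler_nat _ 2); lia.
have eN : eps_thm R t / (N.-1)%:R <= eps_thm R t.
  by rewrite ler_pdivrMr; [nra | lra].
by rewrite /smooth_target; case: ifP => _; apply/andP; split; lra.
Qed.

Lemma forecast_bounds t y : (t <= T)%N ->
  eps_thm R (maxn t 1) / (N.-1)%:R <= forecast t y <= 1.
Proof.
elim: t y => [|t IH] y tT; first by rewrite forecast0 p_ge (is_distr_le1 _ p_distr).
have a0 : 0 < alpha_thm R N t.+1 by rewrite alpha_thmE expR_gt0.
have b0 : 0 < 1 - alpha_thm R N t.+1 := beta_gt0 R N2 (ltn0Sn t).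
have eps_mono : eps_thm R (maxn t.+1 1) <= eps_thm R (maxn t 1).
  by rewrite !eps_thmE lef_pV2 ?posrE ?ltr0n // ler_nat; lia.
have N1 := predN_ge1.
have := forecastS (Ordinal tT) y; rewrite /= => ->.
case/andP: (IH y (ltnW tT)) => lo1 hi1.
case/andP: (@smooth_target_bounds t.+1 (tnth xs (Ordinal tT)) y isT) => lo2 hi2.
have : eps_thm R (maxn t.+1 1) / (N.-1)%:R <= eps_thm R (maxn t 1) / (N.-1)%:R.
  by rewrite ler_pM2r ?invr_gt0 //; lra.
rewrite (maxn_idPl _) // in lo2 * => lo.
apply/andP; split; nra.
Qed.

Lemma forecast_ge t y : (t <= T)%N -> ((N * T.+1)%:R)^-1 <= forecast t y.
Proof.
move=> tT; case/andP: (forecast_bounds y tT) => + _; apply: le_trans.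
by rewrite eps_thmE -invfM -natrM lef_pV2 ?posrE ?ltr0n ?ler_nat; nia.
Qed.

Lemma forecast_gt0 t y : (t <= T)%N -> 0 < forecast t y.
Proof. by move=> tT; apply: lt_le_trans (forecast_ge y tT); rewrite invr_gt0 ltr0n; nia. Qed.

Lemma forecast_le1 t y : (t <= T)%N -> forecast t y <= 1.
Proof. by move=> tT; case/andP: (forecast_bounds y tT). Qed.

Local Notation L := (ln (N%:R * T.+1%:R : R)).
Local Notation K := (beta R N T.+1)^-1.

(* [1 + boost t] is the factor by which the forecast of the observed symbol
   exceeds [alpha_thm R N t.+1] times its previous value. *)
Definition boost (t : 'I_T) : R :=
  beta R N t.+1 * (1 - eps_thm R t.+1) / (alpha_thm R N t.+1 * forecast t (tnth xs t)).

Lemma boost_gt0 (t : 'I_T) : 0 < boost t.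
Proof.
have tT := ltnW (ltn_ord t).
rewrite divr_gt0 ?mulr_gt0 ?forecast_gt0 ?beta_gt0 ?alpha_thmE ?expR_gt0 //.
by rewrite eps_thmE subr_gt0 invf_lt1 ?ltr0n // ltr1n.
Qed.

Lemma ln_forecastS_ge (t : 'I_T) y :
  ln (alpha_thm R N t.+1) + (if y == tnth xs t then ln (1 + boost t) else 0)
    <= ln (forecast t.+1 y) - ln (forecast t y).
Proof.
have tT := ltnW (ltn_ord t).
have a0 : 0 < alpha_thm R N t.+1 by rewrite alpha_thmE expR_gt0.
have f0 := forecast_gt0 y tT.
case: eqP => [->|_].
  have -> : forecast t.+1 (tnth xs t)
      = alpha_thm R N t.+1 * forecast t (tnth xs t) * (1 + boost t).
    rewrite forecastS /smooth_target eqxx /boost /beta.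
    by field; rewrite !gt_eqF ?forecast_gt0.
  have z0 := boost_gt0 t; rewrite !lnM ?posrE ?mulr_gt0 ?forecast_gt0 //; lra.
rewrite addr0 lerBrDr -lnM ?posrE // ler_ln ?posrE ?mulr_gt0 ?forecast_gt0 //.
rewrite forecastS lerDl mulr_ge0 //.
  by rewrite subr_ge0; apply/ltW; rewrite alpha_thmE expR_lt1 oppr_lt0 gamma_gt0.
case/andP: (@smooth_target_bounds t.+1 (tnth xs t) y isT) => + _; apply: le_trans.
by rewrite divr_ge0 ?ler0n // eps_thmE invr_ge0 ler0n.
Qed.

Definition cross_loss t (u : 'I_N -> R) := \sum_y u y * - ln (forecast t y).
Definition log_mass t := \sum_y ln (forecast t y).

Lemma nln_forecast_bounds t y : (t <= T)%N -> 0 <= - ln (forecast t y) <= L.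
Proof.
move=> tT; have f0 := forecast_gt0 y tT.
rewrite oppr_ge0 ln_le0 ?forecast_le1 //= lerNl.
have NT0 : (0 : R) < (N * T.+1)%:R by rewrite ltr0n; nia.
have : ln ((N * T.+1)%:R^-1) <= ln (forecast t y).
  by rewrite ler_ln ?posrE ?invr_gt0 ?forecast_ge.
by rewrite lnV ?posrE // natrM.
Qed.

Lemma cross_loss_bounds t u : (t <= T)%N -> is_distr u -> 0 <= cross_loss t u <= L.
Proof.
move=> tT [u0 u1]; apply/andP; split.
  apply: sumr_ge0 => y _; apply: mulr_ge0 => //.
  by case/andP: (nln_forecast_bounds y tT).
have -> : L = \sum_y u y * L by rewrite -mulr_suml u1 mul1r.
apply: ler_sum => y _; apply: ler_wpM2l => //.
by case/andP: (nln_forecast_bounds y tT).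
Qed.

Lemma log_mass_le0 t : (t <= T)%N -> log_mass t <= 0.
Proof.
move=> tT; rewrite -oppr_ge0 -sumrN; apply: sumr_ge0 => y _.
by case/andP: (nln_forecast_bounds y tT).
Qed.

Lemma loss_step (t : 'I_T) u : is_distr u -> 0 < u (tnth xs t) ->
  ln (u (tnth xs t)) - ln (forecast t (tnth xs t)) <=
    (cross_loss t u - cross_loss t.+1 u) / beta R N t.+1
    + (ln t.+2%:R - ln t.+1%:R) + (log_mass t.+1 - log_mass t) + N%:R * gamma R N t.+1.
Proof.
move=> [u0 u1] ux0; set x := tnth xs t; set z := boost t.
have tT := ltnW (ltn_ord t).
have incr := ln_forecastS_ge t.
have cross_incr : ln (alpha_thm R N t.+1) + u x * ln (1 + z)
    <= cross_loss t u - cross_loss t.+1 u.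
  have -> : cross_loss t u - cross_loss t.+1 u
      = \sum_y u y * (ln (forecast t.+1 y) - ln (forecast t y)).
    by rewrite /cross_loss -sumrB; apply: eq_bigr => y _; ring.
  have -> : ln (alpha_thm R N t.+1) + u x * ln (1 + z) =
      \sum_y u y * (ln (alpha_thm R N t.+1) + (if y == x then ln (1 + z) else 0)).
    have e : ln (alpha_thm R N t.+1) = \sum_y u y * ln (alpha_thm R N t.+1).
      by rewrite -mulr_suml u1 mul1r.
    rewrite {1}e -(sum_if_eq (fun y => u y * ln (1 + z)) x) -big_split.
    by apply: eq_bigr => y _; case: eqP => _ /=; ring.
  by apply: ler_sum => y _; apply: ler_wpM2l; [apply: u0 | apply: incr].
have mass_incr : N%:R * ln (alpha_thm R N t.+1) + ln (1 + z) <= log_mass t.+1 - log_mass t.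
  have e : N%:R * ln (alpha_thm R N t.+1) = \sum_(y : 'I_N) ln (alpha_thm R N t.+1).
    by rewrite sumr_const card_ord mulr_natl.
  rewrite e /log_mass -sumrB -(sum_if_eq (fun=> ln (1 + z)) x) -big_split.
  by apply: ler_sum => y _; apply: incr.
have c0 : 0 < 1 - eps_thm R t.+1.
  by rewrite eps_thmE subr_gt0 invf_lt1 ?ltr0n // ltr1n.
have gain := @ln_ratio_le_smoothing_gain R (forecast t x) (u x) (1 - eps_thm R t.+1)
  (gamma R N t.+1) (alpha_thm R N t.+1) (beta R N t.+1) z (forecast_gt0 x tT) ux0 c0
  (gamma_gt0 R N2 (ltn0Sn t)) (alpha_thmE _ _ _) erefl erefl.
have ln_c : - ln (1 - eps_thm R t.+1) = ln t.+2%:R - ln t.+1%:R.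
  rewrite -ln_div ?posrE ?ltr0n // -lnV ?posrE //.
  have t0 : (0 : R) <= t%:R := ler0n _ _.
  by congr ln; rewrite eps_thmE; field; rewrite !gt_eqF //; lra.
have ln_alpha : ln (alpha_thm R N t.+1) = - gamma R N t.+1 by rewrite alpha_thmE expRK.
have b0 : 0 < beta R N t.+1 := beta_gt0 R N2 (ltn0Sn t).
have cross_div : (- gamma R N t.+1 + u x * ln (1 + z)) / beta R N t.+1
    <= (cross_loss t u - cross_loss t.+1 u) / beta R N t.+1.
  by rewrite -ln_alpha ler_pM2r ?invr_gt0.
rewrite ln_alpha in mass_incr; rewrite [_ * _ - _]addrC in gain; lra.
Qed.

(* Since [cross_loss <= L], the term [L * (K - 1 / beta t.+1)] absorbs the
   growth of the weight [1 / beta t.+1] of the cross loss. *)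
Definition potential t u : R :=
  cross_loss t u / beta R N t.+1 + L * (K - (beta R N t.+1)^-1)
  - log_mass t - ln t.+1%:R.

Lemma potential_step (t : 'I_T) u : is_distr u -> 0 < u (tnth xs t) ->
  ln (u (tnth xs t)) - ln (forecast t (tnth xs t)) <=
    potential t u - potential t.+1 u + N%:R * gamma R N t.+1.
Proof.
move=> u_distr ux0; have step := loss_step u_distr ux0.
have [_ cross_le] := andP (cross_loss_bounds (ltn_ord t) u_distr).
have b1 : 0 < beta R N t.+1 := beta_gt0 R N2 (ltn0Sn t).
have b2 : 0 < beta R N t.+2 := beta_gt0 R N2 (ltn0Sn t.+1).
have binv : (beta R N t.+1)^-1 <= (beta R N t.+2)^-1.
  by rewrite lef_pV2 ?posrE // beta_le.
have : 0 <= (L - cross_loss t.+1 u) * ((beta R N t.+2)^-1 - (beta R N t.+1)^-1).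
  by apply: mulr_ge0; lra.
move: step; rewrite /potential !mulrBr !mulrBl; lra.
Qed.

Lemma potential0_le u : is_distr u -> potential 0 u <= L * K + N%:R * ln (2 * N%:R).
Proof.
move=> u_distr; have [_ cross_le] := andP (cross_loss_bounds (leq0n T) u_distr).
have b1 : 0 < beta R N 1 := beta_gt0 R N2 (ltn0Sn 0).
have N0 : (0 : R) < N%:R by rewrite ltr0n; lia.
have N1 := predN_ge1.
have cross_div : cross_loss 0 u / beta R N 1 <= L / beta R N 1.
  by rewrite ler_pM2r ?invr_gt0.
have mass_ge : - log_mass 0 <= N%:R * ln (2 * N%:R).
  have -> : N%:R * ln (2 * N%:R) = \sum_(y : 'I_N) ln (2 * N%:R) :> R.
    by rewrite sumr_const card_ord mulr_natl.
  rewrite /log_mass forecast0 -sumrN.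
  apply: ler_sum => y _.
  have lo : (2 * N%:R)^-1 <= p y.
    apply: le_trans (p_ge y); rewrite eps_thmE -invfM lef_pV2 ?posrE ?mulr_gt0 //; try lra.
    by rewrite ler_pM2l // ler_nat leq_pred.
  have py0 : 0 < p y by apply: lt_le_trans lo; rewrite invr_gt0; lra.
  have : ln ((2 * N%:R)^-1) <= ln (p y) by rewrite ler_ln ?posrE ?invr_gt0 //; lra.
  rewrite lnV ?posrE; lra.
rewrite /potential ln1; lra.
Qed.

Lemma potentialT_ge u : is_distr u -> - ln T.+1%:R <= potential T u.
Proof.
move=> u_distr; have [cross0 _] := andP (cross_loss_bounds (leqnn T) u_distr).
have mass_le0 := log_mass_le0 (leqnn T).
have : 0 <= cross_loss T u / beta R N T.+1 by rewrite divr_ge0 // ltW ?beta_gt0.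
rewrite /potential subrr mulr0 addr0; lra.
Qed.

Lemma potential_switch t u v : (t <= T)%N -> is_distr u -> is_distr v ->
  potential t v - potential t u <= L / 2 * K * l1dist v u.
Proof.
move=> tT [u0 u1] [v0 v1].
have b1 : 0 < beta R N t.+1 := beta_gt0 R N2 (ltn0Sn t).
have -> : potential t v - potential t u = (cross_loss t v - cross_loss t u) / beta R N t.+1.
  by rewrite /potential; field; rewrite !gt_eqF ?beta_gt0.
(* [v - u] has total mass 0, so [- ln forecast] may be centred at [L / 2], where
   its sup norm is [L / 2]. *)
have cross_diff : cross_loss t v - cross_loss t u <= L / 2 * l1dist v u.
  have <- : \sum_y (v y - u y) * (- ln (forecast t y) - L / 2)
      = cross_loss t v - cross_loss t u.
    rewrite (eq_bigr (fun y => (v y - u y) * - ln (forecast t y) - (v y - u y) * (L / 2)));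
      last by move=> y _; rewrite mulrBr.
    rewrite sumrB -mulr_suml sumrB u1 v1 subrr mul0r subr0 /cross_loss -sumrB.
    by apply: eq_bigr => y _; ring.
  rewrite /l1dist mulr_sumr; apply: ler_sum => y _.
  apply: le_trans (ler_norm _) _; rewrite normrM mulrC ler_wpM2r //.
  by rewrite ler_norml; case/andP: (nln_forecast_bounds y tT) => lo hi; apply/andP; split; lra.
have l0 : 0 <= l1dist v u by apply: sumr_ge0.
have L0 : 0 <= L := ltW (ln_mulNS_gt0 R N2 T).
have bK : (beta R N t.+1)^-1 <= K by rewrite lef_pV2 ?posrE ?beta_gt0 // beta_le.
apply: le_trans (_ : L / 2 * l1dist v u / beta R N t.+1 <= _).
  by rewrite ler_pM2r ?invr_gt0.
rewrite mulrAC; apply: ler_wpM2r => //.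
by apply: ler_wpM2l; rewrite ?divr_ge0.
Qed.

Lemma regret_on_range a c u : (a <= c <= T)%N -> is_distr u ->
  (forall t : 'I_T, (a <= t < c)%N -> 0 < u (tnth xs t)) ->
  \sum_(t < T | (a <= t < c)%N) (ln (u (tnth xs t)) - ln (forecast t (tnth xs t)))
    <= potential a u - potential c u
       + \sum_(t < T | (a <= t < c)%N) N%:R * gamma R N t.+1.
Proof.
case/andP=> ac cT u_distr u_pos.
apply: le_trans (ler_sum _ (fun t ht => potential_step u_distr (u_pos t ht))) _.
rewrite big_split /= lerD2r (big_ord_range_cond a (fun k => potential k u - potential k.+1 u) cT).
rewrite -opprB -(telescope_sumr (fun k => potential k u) ac) -sumrN.
by apply: ler_sum => k _; rewrite opprB.
Qed.

Lemma code_length_forecast :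
  code_length (PS (alpha_thm R N) (eps_thm R) p) xs
    = \sum_(t < T) - ln (forecast t (tnth xs t)).
Proof.
apply: eq_bigr => t _.
by rewrite div1r lnV // posrE forecast_gt0 // ltnW.
Qed.

End Dynamics.

Section PiecewiseStationary.
Variables (T n : nat) (b : seq nat).
Hypotheses (b_size : size b = n.+1) (b_sorted : sorted ltn b).
Hypotheses (b_first : nth 0 b 0 = 1%N) (b_last : nth 0 b n = T.+1).

Lemma breaks_mono i j : (i <= j <= n)%N -> (nth 0 b i <= nth 0 b j)%N.
Proof.
case/andP=> ij jn; have := ltn_sorted_uniq_leq b; rewrite b_sorted => /esym/andP[_ b_leq].
by apply: (sorted_leq_nth leq_trans leqnn) => //; rewrite inE b_size ltnS ?(leq_trans ij).
Qed.

Definition seg_start i := (nth 0 b i).-1%N.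

Lemma seg_start_mono i j : (i <= j <= n)%N -> (seg_start i <= seg_start j)%N.
Proof. by move/breaks_mono => h; rewrite /seg_start -!subn1 leq_sub2r. Qed.

Lemma seg_start_first : seg_start 0 = 0%N.
Proof. by rewrite /seg_start b_first. Qed.

Lemma seg_start_last : seg_start n = T.
Proof. by rewrite /seg_start b_last. Qed.

Lemma breaks_gt0 i : (i <= n)%N -> (0 < nth 0 b i)%N.
Proof. by move=> iN; have := @breaks_mono 0 i; rewrite b_first iN; apply. Qed.

Lemma in_segmentE i t : (i <= n)%N ->
  (nth 0 b i <= t.+1 < nth 0 b i.+1)%N = (seg_start i <= t < seg_start i.+1)%N.
Proof.
by move/breaks_gt0; rewrite /seg_start; case: (nth 0 b i) => // a _; case: (nth 0 b i.+1).
Qed.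

Lemma sum_by_segments (V : zmodType) (F : 'I_T -> V) :
  \sum_(t < T) F t = \sum_(i < n) \sum_(t < T | (nth 0 b i <= t.+1 < nth 0 b i.+1)%N) F t.
Proof.
under [RHS]eq_bigr => i _.
  rewrite (eq_bigl (fun t : 'I_T => (seg_start i <= t < seg_start i.+1)%N)); last first.
    by move=> t; rewrite in_segmentE // ltnW.
over.
rewrite big_ord_consecutive_ranges; last exact: seg_start_mono.
by apply: eq_bigl => t; rewrite seg_start_first seg_start_last ltn_ord.
Qed.

End PiecewiseStationary.

Section Regret.
Variables (R : realType) (N : nat).
Hypothesis N2 : (2 <= N)%N.
Variable p : 'I_N -> R.
Hypothesis p_distr : is_distr p.
Hypothesis p_ge : forall x, eps_thm R 1 / (N.-1)%:R <= p x.
Variables (T n : nat) (b : seq nat) (q : nat -> 'I_N -> R).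
Hypothesis T_gt0 : (0 < T)%N.
Hypotheses (b_size : size b = n.+1) (b_sorted : sorted ltn b).
Hypotheses (b_first : nth 0 b 0 = 1%N) (b_last : nth 0 b n = T.+1).
Hypothesis q_distr : forall i, (i < n)%N -> is_distr (q i).
Variable xs : T.-tuple 'I_N.
Hypothesis q_pos : forall (i : 'I_n) (t : 'I_T),
  (nth 0 b i <= t.+1 < nth 0 b i.+1)%N -> 0 < q i (tnth xs t).

Local Notation L := (ln (N%:R * T.+1%:R : R)).
Local Notation K := (beta R N T.+1)^-1.
Local Notation S := (Num.sqrt (2 * N%:R * T.+1%:R * L)).
Local Notation potential := (potential p xs).

Lemma code_length_sub_PWS_length_le :
  code_length (PS (alpha_thm R N) (eps_thm R) p) xs - PWS_length n b q xs <=
  \sum_(i < n) (potential (seg_start b i) (q i) - potential (seg_start b i.+1) (q i)) + S.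
Proof.
have by_segments := sum_by_segments b_size b_sorted b_first b_last.
have := sum_gamma_le R N2 T; rewrite (by_segments _ (fun t => N%:R * gamma R N t.+1)).
rewrite (code_length_forecast N2 p_distr p_ge T_gt0) by_segments /PWS_length -sumrB.
suff seg (i : 'I_n) :
    \sum_(t < T | (nth 0 b i <= t.+1 < nth 0 b i.+1)%N) - ln (forecast p xs t (tnth xs t))
    - \sum_(t < T | (nth 0 b i <= t.+1 < nth 0 b i.+1)%N) ln (1 / q i (tnth xs t))
    <= potential (seg_start b i) (q i) - potential (seg_start b i.+1) (q i)
       + \sum_(t < T | (nth 0 b i <= t.+1 < nth 0 b i.+1)%N) N%:R * gamma R N t.+1.
  move=> gam; apply: le_trans (ler_sum _ (fun i _ => seg i)) _; rewrite big_split /=; lra.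
have iN := ltnW (ltn_ord i).
have mono := seg_start_mono b_size b_sorted.
have ends : (seg_start b i <= seg_start b i.+1 <= T)%N.
  by rewrite -(seg_start_last b_last) !mono // ?leqnSn ?leqnn ltn_ord.
have in_seg (t : 'I_T) := in_segmentE b_size b_sorted b_first t iN.
rewrite -sumrB !(eq_bigl _ _ in_seg).
rewrite (eq_bigr (fun t : 'I_T => ln (q i (tnth xs t)) - ln (forecast p xs t (tnth xs t)))).
  apply: (regret_on_range N2 p_distr p_ge T_gt0 ends (q_distr (ltn_ord i))).
  by move=> t; rewrite -in_seg; apply: q_pos.
move=> t; rewrite -in_seg => /q_pos qt.
by rewrite div1r lnV ?posrE // opprK addrC.
Qed.

Lemma potential_segments_le :
  \sum_(i < n) (potential (seg_start b i) (q i) - potential (seg_start b i.+1) (q i))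
  <= L * K + N%:R * ln (2 * N%:R) + ln T.+1%:R
     + L / 2 * K * \sum_(i < n.-1) l1dist (q i.+1) (q i).
Proof.
have n0 : (0 < n)%N.
  by rewrite lt0n; apply/eqP => n_eq0; move: b_last; rewrite n_eq0 b_first; case; lia.
rewrite (sumr_telescope_switch (fun j i => potential (seg_start b j) (q i))) //=.
rewrite (seg_start_first b_first) (seg_start_last b_last).
have first_le := potential0_le N2 p_distr p_ge T_gt0 xs (q_distr n0).
have q_last : is_distr (q n.-1) by apply: q_distr; rewrite ltn_predL.
have last_ge := potentialT_ge N2 p_distr p_ge T_gt0 xs q_last.
have switches : \sum_(i < n.-1)
    (potential (seg_start b i.+1) (q i.+1) - potential (seg_start b i.+1) (q i))
    <= L / 2 * K * \sum_(i < n.-1) l1dist (q i.+1) (q i).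
  rewrite mulr_sumr; apply: ler_sum => i _.
  have i1 : (i.+1 < n)%N by rewrite -ltn_predRL.
  apply: (potential_switch N2 p_distr p_ge T_gt0 xs _ (q_distr (ltnW i1)) (q_distr i1)).
  by rewrite -(seg_start_last b_last) (seg_start_mono b_size b_sorted) // leqnn ltnW.
lra.
Qed.

Lemma PS_regret_PWS :
  code_length (PS (alpha_thm R N) (eps_thm R) p) xs <=
  PWS_length n b q xs + S * (1 + PWS_complexity n q)
  + (L + N%:R * ln (2 * N%:R) + ln T.+1%:R).
Proof.
have regret := code_length_sub_PWS_length_le; have segments := potential_segments_le.
have LK := ln_div_beta_le R N2 T; have LS := ln_mulNS_le_sqrt R N2 T.
have l0 : 0 <= \sum_(i < n.-1) l1dist (q i.+1) (q i) by do 2!apply: sumr_ge0 => ? _.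
have : L / 2 * K * \sum_(i < n.-1) l1dist (q i.+1) (q i)
    <= S * \sum_(i < n.-1) l1dist (q i.+1) (q i).
  by apply: ler_wpM2r => //; rewrite mulrAC; lra.
rewrite /PWS_complexity; lra.
Qed.

End Regret.

Lemma lower_order_terms_le (R : realType) (N T : nat) : (2 <= N)%N -> (2 <= T)%N ->
  ln (N%:R * T.+1%:R) + N%:R * ln (2 * N%:R) + ln T.+1%:R
    <= (6 + 2 * ln (2 * N%:R)) * N%:R * ln (T%:R : R).
Proof.
move=> N2 T2.
have NR : (2 : R) <= N%:R by rewrite (ler_nat _ 2).
have TR : (2 : R) <= T%:R by rewrite (ler_nat _ 2).
have lnT : 1 / 2 <= ln (T%:R : R).
  have := @subr1V_le_ln R T%:R ltac:(lra).
  have : (T%:R : R)^-1 <= 2^-1 by rewrite lef_pV2 ?posrE //; lra.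
  lra.
have lnN : ln (N%:R : R) <= N%:R by apply/ltW/ln_sublinear; lra.
have ln2N : 0 <= ln (2 * N%:R : R) by apply: ln_ge0; lra.
have lnTS : ln (T.+1%:R : R) <= 2 * ln (T%:R : R).
  have <- : ln ((T%:R : R) ^+ 2) = 2 * ln (T%:R : R) by rewrite lnXn ?mulr_natl //; lra.
  by rewrite ler_ln ?posrE ?exprn_gt0 ?ltr0n -?natrX ?ler_nat //; nia.
rewrite lnM ?posrE ?ltr0n //; try lia.
set l := ln (T%:R : R) in lnT lnTS *; set m := ln (2 * N%:R : R) in ln2N *.
have : 0 <= N%:R * m * (2 * l - 1) by rewrite !mulr_ge0 //; lra.
have : 0 <= (N%:R - 1) * l by rewrite mulr_ge0 //; lra.
have : 0 <= N%:R * (2 * l - 1) by rewrite mulr_ge0 //; lra.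
nra.
Qed.

Unset Implicit Arguments.

Theorem theorem2 (R : realType) (N : nat) : (2 <= N)%N ->
  exists g : nat -> ('I_N -> R) -> R,
    (exists (c : R) (T0 : nat), forall (T : nat) (p : 'I_N -> R),
        (T0 <= T)%N -> is_distr p ->
        (forall x, eps_thm R 1 / (N.-1)%:R <= p x) ->
        g T p <= c * N%:R * ln (T%:R : R)) /\
    (forall (T : nat) (p : 'I_N -> R), (2 <= T)%N -> is_distr p ->
      (forall x, eps_thm R 1 / (N.-1)%:R <= p x) ->
      forall (n : nat) (b : seq nat) (q : nat -> 'I_N -> R),
        is_PWS T n b q ->
      forall xs : T.-tuple 'I_N,
        (forall (i : 'I_n) (t : 'I_T),
            (nth 0 b i <= t.+1 < nth 0 b i.+1)%N -> 0 < q i (tnth xs t)) ->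
        code_length (PS (alpha_thm R N) (eps_thm R) p) xs <=
          PWS_length n b q xs
          + Num.sqrt (2 * N%:R * (T.+1)%:R * ln (N%:R * (T.+1)%:R))
              * (1 + PWS_complexity n q)
          + Num.sqrt (128 * N%:R * T%:R / ln (T%:R : R))
          + g T p).
Proof.
move=> N2.
exists (fun T _ => ln (N%:R * T.+1%:R) + N%:R * ln (2 * N%:R) + ln T.+1%:R); split.
  exists (6 + 2 * ln (2 * N%:R)), 2%N => T p T2 _ _.
  exact: lower_order_terms_le.
move=> T p T2 p_distr p_ge n b q [b_size b_sorted b_first b_last q_distr] xs q_pos.
have T_gt0 : (0 < T)%N by apply: leq_trans T2.
have := PS_regret_PWS N2 p_distr p_ge T_gt0 b_size b_sorted b_first b_last q_distr q_pos.
have := sqrtr_ge0 (128 * N%:R * T%:R / ln (T%:R : R)).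
lra.
Qed.
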